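(* Let $X$ be a finite set and $f:2^X\to\mathbb{R}_{\ge0}$ a normalized monotone submodular function which possesses supermodularity of conditioning. Then for every $S\subseteq X$ and every $x\in X\setminus S$, \[ f(x\mid S)\ \ge\ f(x)-\sum_{y\in S}\big(f(x)-f(x\mid y)\big). \]
   Context: $f(x\mid A):=f(A\cup\{x\})-f(A)$, and more generally for sets $T,A$, $f(T\mid A):=f(A\cup T)-f(A)$; $f(T\mid A,C):=f(T\mid A\cup C)$; $f(x):=f(\{x\})$, $f(x\mid y):=f(x\mid\{y\})$. Supermodularity of conditioning: for all $S\subseteq X$, $A\subseteq B\subseteq X$ and $C\subseteq X\setminus B$, $f(S\mid A)-f(S\mid A\cup C)\ge f(S\mid B)-f(S\mid B\cup C)$. *)

From HB Require Import structures.
From mathcomp Require Import all_boot all_order all_algebra.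
Set Implicit Arguments. Unset Strict Implicit. Unset Printing Implicit Defensive.
Import Order.TTheory GRing.Theory Num.Theory.
Local Open Scope ring_scope.

Section SetFun.
Variables (T : finType) (R : realFieldType).

Definition mgain (f : {set T} -> R) (B A : {set T}) : R := f (A :|: B) - f A.

Definition nonneg_setfun (f : {set T} -> R) : Prop := forall A, 0 <= f A.
Definition normalized (f : {set T} -> R) : Prop := f set0 = 0.
Definition monotone_setfun (f : {set T} -> R) : Prop :=
  forall A B : {set T}, A \subset B -> f A <= f B.
Definition submodular (f : {set T} -> R) : Prop :=
  forall A B : {set T}, f (A :|: B) + f (A :&: B) <= f A + f B.

Definition supermod_conditioning (f : {set T} -> R) : Prop :=
  forall S A B C : {set T}, A \subset B -> C \subset ~: B ->
    mgain f S A - mgain f S (A :|: C) >= mgain f S B - mgain f S (B :|: C).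

End SetFun.

From HB Require Import structures.
From mathcomp Require Import all_boot all_order all_algebra.
From mathcomp Require Import lra.
Import Order.TTheory GRing.Theory Num.Theory.
Local Open Scope ring_scope.

(* The loss [f(B) - f(B | S)] of the marginal gain of B is subadditive in S:
   supermodularity of conditioning with A = 0, C = {y} says that adding y to
   any set S costs at most the loss [f(B) - f(B | y)] caused by y alone.
   Summing over the elements of S gives the bound. *)

Section MarginalGainLoss.
Variables (T : finType) (R : realFieldType) (f : {set T} -> R).
Hypothesis f_smc : supermod_conditioning f.
Variable B : {set T}.

Let loss (A : {set T}) : R := mgain f B set0 - mgain f B A.

Lemma mgain_loss_setU1 {A : {set T}} {y : T} : y \notin A ->
  loss (y |: A) <= loss A + loss [set y].
Proof.
move=> yNA; rewrite /loss.
have yC : [set y] \subset ~: A by rewrite sub1set inE.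
have := @f_smc B set0 A [set y] (sub0set A) yC.
rewrite set0U [A :|: _]setUC; lra.
Qed.

Lemma mgain_loss_le_sum (S : {set T}) :
  loss S <= \sum_(y in S) loss [set y].
Proof.
elim: {S} #|S| {-2}S (erefl #|S|) => [|n IH] S cardS.
  move/eqP: cardS; rewrite cards_eq0 => /eqP ->.
  by rewrite big_set0 /loss subrr.
have [y yS] : exists y, y \in S by apply/set0Pn; rewrite -card_gt0 cardS.
have cardSy : #|S :\ y| = n.
  by move: cardS; rewrite (cardsD1 y S) yS add1n => -[].
have yNSy : y \notin S :\ y by rewrite in_setD1 eqxx.
rewrite (big_setD1 y yS) /= -{1}(setD1K yS) addrC.
by apply: (le_trans (mgain_loss_setU1 yNSy)); rewrite lerD2r IH.
Qed.

End MarginalGainLoss.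

Lemma mgain_set0 (T : finType) (R : realFieldType) (f : {set T} -> R)
    (B : {set T}) :
  normalized f -> mgain f B set0 = f B.
Proof. by move=> f0; rewrite /mgain set0U f0 subr0. Qed.

Theorem theorem4 (T : finType) (R : realFieldType) (f : {set T} -> R) :
  nonneg_setfun f -> normalized f -> monotone_setfun f -> submodular f ->
  supermod_conditioning f ->
  forall (S : {set T}) (x : T), x \notin S ->
    mgain f [set x] S >=
      f [set x] - \sum_(y in S) (f [set x] - mgain f [set x] [set y]).
Proof.
move=> _ f0 _ _ f_smc S x _.
have := @mgain_loss_le_sum _ _ f f_smc [set x] S.
by rewrite mgain_set0 // lerBlDr -lerBlDl.
Qed.
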